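(* For all integers $n\geq1$, $$\sum_{k=1}^{n}t^{2(n-k)}\left(\frac{\{k+1\}_{s,t}+t\{k-1\}_{s,t}}{s}\right)\{k\}_{s,t}^3=\left\{{n+1\atop 2}\right\}_{s,t}^2=\left(\sum_{k=1}^{n}\varphi^{2(n-k)}\varphi'^{\,k-1}\{k\}_{s,t}\right)^2.$$
   Context: Let $s,t$ be nonzero reals with $s^2+4t\neq0$; $\varphi=\frac{s+\sqrt{s^2+4t}}{2}$, $\varphi'=\frac{s-\sqrt{s^2+4t}}{2}$. Generalized Fibonacci polynomials: $\{0\}_{s,t}=0$, $\{1\}_{s,t}=1$, $\{n+2\}_{s,t}=s\{n+1\}_{s,t}+t\{n\}_{s,t}$ (so $\{n\}_{s,t}=\frac{\varphi^n-\varphi'^n}{\varphi-\varphi'}$). The generalized triangular numbers are $\left\{{n+1\atop 2}\right\}_{s,t}=\frac{\{n\}_{s,t}\{n+1\}_{s,t}}{s}$. *)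

From mathcomp Require Import all_boot all_order all_algebra.
From mathcomp Require Import complex.
Set Implicit Arguments. Unset Strict Implicit. Unset Printing Implicit Defensive.
Import Order.TTheory GRing.Theory Num.Theory.
Local Open Scope ring_scope.
Local Open Scope complex_scope.

Fixpoint gfib_aux (R : nzRingType) (s t : R) (n : nat) : R * R :=
  match n with
  | 0 => (0, 1)
  | m.+1 => let p := gfib_aux s t m in (p.2, s * p.2 + t * p.1)
  end.
Definition gfib (R : nzRingType) (s t : R) (n : nat) : R := (gfib_aux s t n).1.

Lemma gfib0 (R : nzRingType) (s t : R) : gfib s t 0 = 0. Proof. by []. Qed.
Lemma gfib1 (R : nzRingType) (s t : R) : gfib s t 1 = 1. Proof. by []. Qed.
Lemma gfibSS (R : nzRingType) (s t : R) n :
  gfib s t n.+2 = s * gfib s t n.+1 + t * gfib s t n.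
Proof. by []. Qed.

(* generalized triangular number {n+1 choose 2}_{s,t} = {n}{n+1}/s *)
Definition gtri (R : fieldType) (s t : R) (n : nat) : R :=
  gfib s t n * gfib s t n.+1 / s.

(* phi and phi' as elements of R[i] (the discriminant may be negative) *)
Definition gphi (R : rcfType) (s t : R) : R[i] :=
  ((s%:C) + sqrtC ((s ^+ 2 + 4 * t)%:C)) / 2.
Definition gphi' (R : rcfType) (s t : R) : R[i] :=
  ((s%:C) - sqrtC ((s ^+ 2 + 4 * t)%:C)) / 2.

(* Both sides are sums of the shape u_n = sum_{k<=n} c^(n-k) b_k, i.e. solutions of
   u_(n+1) = c u_n + b_(n+1) with u_0 = 0, so it suffices to check that the
   triangular numbers satisfy the corresponding one-step recurrences.  For the
   first identity (c = t^2) this is a direct field computation.  For the second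
   (c = phi^2), with phi + phi' = s and phi phi' = -t one has
   {n+1} - phi {n} = phi'^n, hence {n+2} = phi^2 {n} + s phi'^n, which gives
   {n+1}{n+2}/s = phi^2 {n}{n+1}/s + phi'^n {n+1}. *)
From mathcomp Require Import all_boot all_order all_algebra.
From mathcomp Require Import complex ring.
Set Implicit Arguments. Unset Strict Implicit. Unset Printing Implicit Defensive.
Import Order.TTheory GRing.Theory Num.Theory.
Local Open Scope ring_scope.
Local Open Scope complex_scope.

Lemma sum_linear_recurrence (R : comPzSemiRingType) (c : R) (u b : nat -> R) n :
  u 0%N = 0 -> (forall m, u m.+1 = c * u m + b m.+1) ->
  u n = \sum_(1 <= k < n.+1) c ^+ (n - k) * b k.
Proof.
move=> u0 uS; elim: n => [|n IH]; first by rewrite big_geq.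
rewrite big_nat_recr //= subnn expr0 mul1r uS IH big_distrr /=.
congr (_ + _); apply: eq_big_nat => k /andP [_ lekn].
by rewrite subSn // exprS mulrA.
Qed.

Lemma gfib_rmorph (R S : comNzRingType) (f : {rmorphism R -> S}) (s t : R) n :
  f (gfib s t n) = gfib (f s) (f t) n.
Proof.
suff: f (gfib s t n) = gfib (f s) (f t) n /\
      f (gfib s t n.+1) = gfib (f s) (f t) n.+1 by case.
elim: n => [|n [IH1 IH2]]; first by rewrite rmorph0 rmorph1.
by split=> //; rewrite !gfibSS rmorphD !rmorphM IH1 IH2.
Qed.

Lemma gtri_fmorph (F K : fieldType) (f : {rmorphism F -> K}) (s t : F) n :
  f (gtri s t n) = gtri (f s) (f t) n.
Proof. by rewrite /gtri !rmorphM fmorphV !gfib_rmorph. Qed.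

Section Roots.
Variables (R : comNzRingType) (s t p q : R).
Hypotheses (pq_add : p + q = s) (pq_mul : p * q = - t).

Lemma gfibS_sub_mul n : gfib s t n.+1 - p * gfib s t n = q ^+ n.
Proof.
elim: n => [|n IH]; first by rewrite gfib1 gfib0 mulr0 subr0.
rewrite gfibSS exprS -IH; set a := gfib s t n.+1; set b := gfib s t n.
by rewrite -pq_add -[t]opprK -pq_mul; ring.
Qed.

Lemma gfibSS_roots n : gfib s t n.+2 = p ^+ 2 * gfib s t n + s * q ^+ n.
Proof.
rewrite -[gfib s t n.+2](subrK (p * gfib s t n.+1)) gfibS_sub_mul.
rewrite -[gfib s t n.+1](subrK (p * gfib s t n)) gfibS_sub_mul.
by set b := gfib s t n; rewrite -pq_add exprS; ring.
Qed.

End Roots.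

Lemma gtriS_sqr (F : fieldType) (s t : F) n : s != 0 ->
  gtri s t n.+1 ^+ 2 = t ^+ 2 * gtri s t n ^+ 2
    + (gfib s t n.+2 + t * gfib s t n) / s * gfib s t n.+1 ^+ 3.
Proof. by move=> s0; rewrite /gtri gfibSS; field. Qed.

Lemma gtriS_roots (F : fieldType) (s t p q : F) n :
  s != 0 -> p + q = s -> p * q = - t ->
  gtri s t n.+1 = p ^+ 2 * gtri s t n + q ^+ n * gfib s t n.+1.
Proof. by move=> s0 pq_add pq_mul; rewrite /gtri (gfibSS_roots pq_add pq_mul); field. Qed.

Lemma gphi_add (R : rcfType) (s t : R) : gphi s t + gphi' s t = s%:C.
Proof. by rewrite /gphi /gphi'; field; rewrite ?pnatr_eq0. Qed.

Lemma gphi_mul (R : rcfType) (s t : R) : gphi s t * gphi' s t = - t%:C.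
Proof.
have disc : sqrtC ((s ^+ 2 + 4 * t)%:C) ^+ 2 = s%:C ^+ 2 + 4 * t%:C.
  by rewrite sqrtCK rmorphD !rmorphM rmorph_nat expr2.
rewrite /gphi /gphi'; move: disc; set r := sqrtC _ => disc.
have -> : (s%:C + r) / 2 * ((s%:C - r) / 2) = (s%:C ^+ 2 - r ^+ 2) / 4.
  by field; rewrite ?pnatr_eq0.
by rewrite disc; field; rewrite ?pnatr_eq0.
Qed.

Theorem mainTheorem13 (R : rcfType) (s t : R) (n : nat) :
  s != 0 -> t != 0 -> s ^+ 2 + 4 * t != 0 -> (1 <= n)%N ->
  (\sum_(1 <= k < n.+1)
      t ^+ (2 * (n - k)) * ((gfib s t k.+1 + t * gfib s t k.-1) / s)
      * gfib s t k ^+ 3 = gtri s t n ^+ 2)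
  /\
  ((gtri s t n ^+ 2)%:C =
     (\sum_(1 <= k < n.+1)
        gphi s t ^+ (2 * (n - k)) * gphi' s t ^+ k.-1 * (gfib s t k)%:C) ^+ 2).
Proof.
move=> s0 _ _ _; split.
- rewrite (@sum_linear_recurrence _ (t ^+ 2) (fun m => gtri s t m ^+ 2)
    (fun k => (gfib s t k.+1 + t * gfib s t k.-1) / s * gfib s t k ^+ 3) n).
  + by apply: eq_bigr => k _; rewrite exprM -mulrA.
  + by rewrite /gtri gfib0 !mul0r expr0n.
  + by move=> m; rewrite gtriS_sqr.
- have sC0 : s%:C != 0 by rewrite (inj_eq (@complexI R)).
  rewrite rmorphXn gtri_fmorph; congr (_ ^+ 2).
  rewrite (@sum_linear_recurrence _ (gphi s t ^+ 2) (gtri s%:C t%:C)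
    (fun k => gphi' s t ^+ k.-1 * gfib s%:C t%:C k) n).
  + by apply: eq_bigr => k _; rewrite exprM -mulrA gfib_rmorph.
  + by rewrite /gtri gfib0 !mul0r.
  + move=> m; exact: gtriS_roots m sC0 (gphi_add s t) (gphi_mul s t).
Qed.
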